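(* Let $P$ be a set of $n$ points in the plane in general position with $n$ even, and fix a direction (horizontal axis) such that no two points of $P$ have the same horizontal coordinate. Let $C$ be a connected component of the underlying graph of $P$, with vertex set $V(C)$ of size $m$. Then a vertex $v\in V(C)$ is among the $m/2$ leftmost points of $V(C)$ if and only if it is among the $n/2$ leftmost points of $P$; equivalently, the $m/2$ leftmost points of $V(C)$ are among the $n/2$ leftmost points of $P$ and the $m/2$ rightmost points of $V(C)$ are among the $n/2$ rightmost points of $P$.
   Context: Points are in general position if no three are collinear. For a finite set $P$ of $n$ points in general position with $n$ even, a halving line of $P$ is a line through two points of $P$ that has exactly $(n-2)/2$ points of $P$ strictly on each side. The underlying graph of $P$ has vertex set $P$, and two points are adjacent if and only if the line through them is a halving line of $P$. ''Leftmost'' refers to ordering by the horizontal coordinate in the fixed direction. *)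

From HB Require Import structures.
From mathcomp Require Import all_boot all_order all_algebra.
Set Implicit Arguments. Unset Strict Implicit. Unset Printing Implicit Defensive.
Import Order.TTheory GRing.Theory Num.Theory.
Local Open Scope ring_scope.

Section Halving.
Variable R : realFieldType.

(* orientation determinant of (a, b, c): > 0 iff c is strictly left of the
   directed line a -> b, < 0 iff strictly right, 0 iff collinear *)
Definition orient (a b c : R * R) : R :=
  (b.1 - a.1) * (c.2 - a.2) - (b.2 - a.2) * (c.1 - a.1).

Definition general_position (n : nat) (p : 'I_n -> R * R) : Prop :=
  injective p /\
  forall i j k : 'I_n, i != j -> j != k -> i != k -> orient (p i) (p j) (p k) != 0.

Definition halving (n : nat) (p : 'I_n -> R * R) : rel 'I_n :=
  fun i j =>
    [&& i != j,
        #|[set k | 0 < orient (p i) (p j) (p k)]| == ((n - 2)./2)%N &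
        #|[set k | orient (p i) (p j) (p k) < 0]| == ((n - 2)./2)%N].

Definition nleft (n : nat) (p : 'I_n -> R * R) (S : {set 'I_n}) (v : 'I_n) : nat :=
  #|[set u in S | (p u).1 < (p v).1]|.

End Halving.

From HB Require Import structures.
From mathcomp Require Import all_boot all_order all_algebra.
From mathcomp Require Import zify ring.
Set Implicit Arguments. Unset Strict Implicit. Unset Printing Implicit Defensive.
Import Order.TTheory GRing.Theory Num.Theory.
Local Open Scope ring_scope.

(* Fix a point v, write n - 2 = 2h, and rotate a directed line
   around v.  Sorting the other points by the slope of their segment to v, the
   number of points on the left of the line v -> u is a "crossing rank" of u,
   and u is a halving neighbour of v exactly when this rank equals h.  A purely
   combinatorial counting lemma about crossing ranks (crossing_rank_balance)
   then gives, at every vertex v, the local balance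
     #(halving nbrs right of v) + [h < #points left of v]
       = #(halving nbrs left of v) + [h < #points right of v].
   Summing over a connected component C, every edge of C is counted once on
   each side, so the numbers of vertices of C among the n/2 leftmost and among
   the n/2 rightmost points of P coincide: exactly m/2 vertices of C are among
   the n/2 leftmost points.  Since these form an initial segment of C in the
   horizontal order, they are the m/2 leftmost points of C, which is the claim. *)

Lemma card_in_setD1 (T : finType) (S : {set T}) (z : T) (P : pred T) : z \in S ->
  #|[set u in S | P u]| = (P z + #|[set u in S :\ z | P u]|)%N.
Proof.
move=> zS; rewrite (cardsD1 z [set u in S | P u]) !inE zS /=; congr (_ + _)%N.
by apply: eq_card => u; rewrite !inE andbA.
Qed.

Lemma card_in_setC (T : finType) (S : {set T}) (P : pred T) :
  (#|[set u in S | P u]| + #|[set u in S | ~~ P u]| = #|S|)%N.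
Proof.
rewrite -(cardsID [set u | P u] S); congr (_ + _)%N;
by apply: eq_card => u; rewrite !inE andbC.
Qed.

Lemma card_in_set_sum (T : finType) (S : {set T}) (P : pred T) :
  #|[set u in S | P u]| = (\sum_(u in S) (P u : nat))%N.
Proof.
rewrite -sum1_card (eq_bigl (fun u => (u \in S) && P u)) => [|u]; last by rewrite !inE.
by rewrite big_mkcondr /=; apply: eq_bigr => u _; case: (P u).
Qed.

Lemma eq_in_set (T : finType) (A : {set T}) (P Q : pred T) : {in A, P =1 Q} ->
  [set u in A | P u] = [set u in A | Q u].
Proof. by move=> PQ; apply/setP => u; rewrite !inE; case: (boolP (u \in A)) => // /PQ ->. Qed.

Section CrossingRank.
(* Points of S are placed on a line by the injective key s and 2-coloured by
   col. *)
Variables (R : realFieldType) (T : finType) (s : T -> R) (col : pred T).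

Definition crossing_rank (S : {set T}) (u : T) : nat :=
  #|[set w in S | if col w then s w < s u else s u < s w]|.

Section RemoveMax.
Variables (S : {set T}) (z : T).
Hypotheses (zS : z \in S) (zmax : forall u, u \in S :\ z -> s u < s z).

Lemma crossing_rank_max : crossing_rank S z = #|[set w in S :\ z | col w]|.
Proof.
rewrite /crossing_rank (card_in_setD1 _ zS) ltxx if_same add0n.
rewrite (@eq_in_set _ _ _ col) // => w /zmax lt_wz.
by case: (col w); rewrite ?lt_wz // ltNge ltW.
Qed.

Lemma crossing_rank_remove_max u : u \in S :\ z ->
  crossing_rank S u = ((~~ col z) + crossing_rank (S :\ z) u)%N.
Proof.
move=> /zmax lt_uz; rewrite /crossing_rank (card_in_setD1 _ zS); congr (_ + _)%N.
by case: (col z) => /=; rewrite ?lt_uz // ltNge ltW.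
Qed.
End RemoveMax.

(* Proved by
   removing the element of largest key. *)
Lemma crossing_rank_balance (S : {set T}) : {in S &, injective s} -> forall h,
 (#|[set u in S | col u & crossing_rank S u == h]| + (h < #|[set u in S | ~~ col u]|)
  = #|[set u in S | ~~ col u & crossing_rank S u == h]| + (h < #|[set u in S | col u]|))%N.
Proof.
move: {2}#|S| (erefl #|S|) => k; elim: k S => [|k IH] S cS inj h.
  move/eqP: cS; rewrite cards_eq0 => /eqP ->.
  by rewrite !(eq_card0 (A := [set u in set0 | _])) // => u; rewrite !inE.
have [z0 z0S] : exists z, z \in S by apply/set0Pn; rewrite -card_gt0 cS.
have [z zS_mem zmax] := @arg_maxP _ _ _ z0 (mem S) s z0S.
have zS : z \in S := zS_mem.
set S' := S :\ z.
have cS' : #|S'| = k by move: cS; rewrite (cardsD1 z S) zS add1n => -[].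
have inj' : {in S' &, injective s}.
  by move=> a b; rewrite !inE => /andP[_ aS] /andP[_ bS]; apply: inj.
have lt_z u : u \in S' -> s u < s z.
  move=> /setD1P[uz uS]; rewrite lt_neqAle; apply/andP; split; last exact: zmax.
  by apply: contra uz => /eqP /(inj _ _ uS zS) ->.
have rankS := crossing_rank_remove_max zS lt_z.
have shift (Q : pred T) h1 h2 : h1 = ((~~ col z) + h2)%N ->
    [set u in S' | Q u & crossing_rank S u == h1] = [set u in S' | Q u & crossing_rank S' u == h2].
  by move=> ->; apply: eq_in_set => u /rankS ->; rewrite eqn_add2l.
rewrite !(card_in_setD1 _ zS) (crossing_rank_max zS lt_z) -/S'.
have IHh := IH S' cS' inj'.
case: (boolP (col z)) => cz /=; rewrite ?add0n ?add1n.
  rewrite (shift _ h h) ?cz // (shift _ h h) ?cz //.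
  have := IHh h; rewrite ltnS; case: (ltngtP h #|[set w in S' | col w]|) => //= _; lia.
case: h => [|h].
  have no_rank0 (Q : pred T) : [set u in S' | Q u & crossing_rank S u == 0%N] = set0.
    apply/setP => u; rewrite in_set0 in_set.
    by case: (boolP (u \in S')) => //= /rankS ->; rewrite cz andbF.
  by rewrite !no_rank0 cards0; case: #|[set w in S' | col w]|.
rewrite (shift _ h.+1 h) ?cz // (shift _ h.+1 h) ?cz //.
have := IHh h; rewrite ltnS.
case: (ltngtP h.+1 #|[set w in S' | col w]|) => //= _;
case: (ltngtP h #|[set w in S' | col w]|) => //= _; lia.
Qed.
End CrossingRank.

Lemma orient_swap (R : realFieldType) (a b c : R * R) : orient b a c = - orient a b c.
Proof. rewrite /orient; ring. Qed.

Lemma orient_aba (R : realFieldType) (a b : R * R) : orient a b a = 0.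
Proof. rewrite /orient; ring. Qed.

Lemma orient_abb (R : realFieldType) (a b : R * R) : orient a b b = 0.
Proof. rewrite /orient; ring. Qed.

Section HalvingGeometry.
Variables (R : realFieldType) (n : nat) (p : 'I_n -> R * R).
Hypotheses (hgp : general_position p) (hx : injective (fun i => (p i).1)).

Definition slope (v w : 'I_n) : R := ((p w).2 - (p v).2) / ((p w).1 - (p v).1).

Definition right_degree (a : 'I_n) : nat := #|[set u | halving p a u & (p a).1 < (p u).1]|.
Definition left_degree (a : 'I_n) : nat := #|[set u | halving p a u & (p u).1 < (p a).1]|.

(* The halving relation is symmetric: swapping i and j swaps the two sides. *)
Lemma halving_sym i j : halving p i j = halving p j i.
Proof.
rewrite /halving eq_sym.
have -> : [set k | 0 < orient (p j) (p i) (p k)] = [set k | orient (p i) (p j) (p k) < 0].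
  by apply/setP => k; rewrite !inE orient_swap oppr_gt0.
have -> : [set k | orient (p j) (p i) (p k) < 0] = [set k | 0 < orient (p i) (p j) (p k)].
  by apply/setP => k; rewrite !inE orient_swap oppr_lt0.
by case: (j != i) => //=; exact: andbC.
Qed.

Lemma dx_neq0 u v : u != v -> (p u).1 - (p v).1 != 0.
Proof. by move=> uv; rewrite subr_eq0; apply: contra uv => /eqP /hx ->. Qed.

Lemma orient_slope v u w : u != v -> w != v ->
  orient (p v) (p u) (p w) =
   ((p u).1 - (p v).1) * ((p w).1 - (p v).1) * (slope v w - slope v u).
Proof.
move=> uv wv; have hu := dx_neq0 uv; have hw := dx_neq0 wv.
by rewrite /orient /slope; field; apply/andP.
Qed.

(* No three points being collinear, the slopes seen from v are pairwise distinct. *)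
Lemma slope_inj v : {in [set~ v] &, injective (slope v)}.
Proof.
move=> a b; rewrite !inE => av bv e; apply/eqP; apply/negPn/negP => ab.
have [_ gp] := hgp; have := gp v a b; rewrite eq_sym av ab eq_sym bv => /(_ isT isT isT).
by rewrite (orient_slope av bv) e subrr mulr0 eqxx.
Qed.

(* Colour a point by lying to the right of v.  The crossing rank of u with
   respect to slopes around v is then the number of points strictly on one
   fixed side of the line through p v and p u. *)
Definition right_of (v w : 'I_n) : bool := (p v).1 < (p w).1.

Lemma crossing_rank_side v u : u != v ->
  [set w in [set~ v] | if right_of v w then slope v w < slope v u else slope v u < slope v w]
  = if right_of v u then [set k | orient (p v) (p u) (p k) < 0]
    else [set k | 0 < orient (p v) (p u) (p k)].
Proof.
move=> uv; apply/setP => w.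
have ra : right_of v u = (0 < (p u).1 - (p v).1) by rewrite /right_of subr_gt0.
rewrite ra; have := dx_neq0 uv; set a := (p u).1 - (p v).1 => a0.
case: (eqVneq w v) => [->|wv]; first by case: (0 < a); rewrite !inE eqxx orient_aba ltxx.
have rb : right_of v w = (0 < (p w).1 - (p v).1) by rewrite /right_of subr_gt0.
have := dx_neq0 wv; set b := (p w).1 - (p v).1 => b0.
have sgn_b (c d : R) : (if 0 < b then c < d else d < c) = (b * (c - d) < 0).
  move: b0; rewrite neq_lt => /orP[lt_b0|gt_b0].
    by rewrite ltNge (ltW lt_b0) /= nmulr_rlt0 // subr_gt0.
  by rewrite gt_b0 pmulr_rlt0 // subr_lt0.
move: a0; rewrite neq_lt => /orP[lt_a0|gt_a0].
  rewrite ltNge (ltW lt_a0) !inE wv rb (orient_slope uv wv) -/a -/b -mulrA nmulr_rgt0 //.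
  by rewrite /= -sgn_b.
rewrite gt_a0 !inE wv rb (orient_slope uv wv) -/a -/b -mulrA pmulr_rlt0 //.
by rewrite /= -sgn_b.
Qed.

Lemma card_sides v u : u != v ->
  addn #|[set k | 0 < orient (p v) (p u) (p k)]| #|[set k | orient (p v) (p u) (p k) < 0]|
  = (n - 2)%N.
Proof.
move=> uv; have [_ gp] := hgp; rewrite -cardsUI.
have -> : [set k | 0 < orient (p v) (p u) (p k)] :&: [set k | orient (p v) (p u) (p k) < 0]
    = set0.
  by apply/setP => k; rewrite !inE; apply/negbTE; rewrite negb_and -!leNgt le_total.
have -> : [set k | 0 < orient (p v) (p u) (p k)] :|: [set k | orient (p v) (p u) (p k) < 0]
   = ~: [set v; u].
  apply/setP => k; rewrite !inE negb_or.
  case: (eqVneq k v) => [->|kv]; first by rewrite orient_aba ltxx.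
  case: (eqVneq k u) => [->|ku]; first by rewrite orient_abb ltxx.
  have := gp v u k; rewrite eq_sym uv (eq_sym u) ku (eq_sym v) kv => /(_ isT isT isT).
  by rewrite neq_lt orbC.
have := cardsC [set v; u]; rewrite cards2 card_ord eq_sym uv cards0; lia.
Qed.

Section HalfCount.
Variable h : nat.
Hypothesis hh : (n - 2 = h + h)%N.

Lemma halving_rank v u : u != v ->
  halving p v u = (crossing_rank (slope v) (right_of v) [set~ v] u == h).
Proof.
move=> uv; have := card_sides uv.
rewrite /halving eq_sym uv /= /crossing_rank (crossing_rank_side uv).
case: (right_of v u); set A := #|[set k | 0 < _]|; set B := #|[set k | _ < 0]| => sides;
  by apply/andP/eqP => [[/eqP ? /eqP ?]|?]; (try split); apply/eqP; lia.
Qed.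

Lemma degree_balance v :
  (right_degree v + (h < nleft p setT v) = left_degree v + (h < n.-1 - nleft p setT v))%N.
Proof.
have x_neq u : u != v -> ((p u).1 == (p v).1) = false.
  by move=> uv; apply/negbTE; rewrite -subr_eq0 dx_neq0.
rewrite /right_degree /left_degree.
have := crossing_rank_balance (right_of v) (slope_inj (v := v)) h.
have -> : [set u | halving p v u & (p v).1 < (p u).1] =
   [set u in [set~ v] | right_of v u & crossing_rank (slope v) (right_of v) [set~ v] u == h].
  apply/setP => u; rewrite !inE; case: (eqVneq u v) => [->|uv] /=.
    by rewrite /halving eqxx.
  by rewrite (halving_rank uv) andbC.
have -> : [set u | halving p v u & (p u).1 < (p v).1] =
   [set u in [set~ v] | ~~ right_of v u & crossing_rank (slope v) (right_of v) [set~ v] u == h].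
  apply/setP => u; rewrite !inE; case: (eqVneq u v) => [->|uv] /=.
    by rewrite /halving eqxx.
  by rewrite (halving_rank uv) andbC /right_of -leNgt le_eqVlt x_neq.
have left_v : #|[set u in [set~ v] | ~~ right_of v u]| = nleft p setT v.
  apply: eq_card => u; rewrite !inE /right_of -leNgt le_eqVlt.
  by case: (eqVneq u v) => [->|uv] /=; rewrite ?ltxx ?x_neq.
have := card_in_setC [set~ v] (right_of v); rewrite cardsC1 card_ord left_v.
move=> split_v ->; congr (_ + (_ < _))%N; lia.
Qed.
End HalfCount.

(* Inside a set closed under halving lines, edges counted at their left
   endpoints and at their right endpoints give the same total. *)
Lemma sum_right_left_degree (C : {set 'I_n}) :
  (forall a b, a \in C -> halving p a b -> b \in C) ->
  (\sum_(a in C) right_degree a = \sum_(a in C) left_degree a)%N.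
Proof.
move=> closC; pose edge a b := halving p a b && ((p a).1 < (p b).1).
transitivity (\sum_(a in C) \sum_(b in C) (edge a b : nat))%N.
  apply: eq_bigr => a aC; rewrite -card_in_set_sum; apply: eq_card => b; rewrite !inE /edge.
  by case hab: (halving p a b); rewrite /= ?andbF // (closC a b aC hab).
rewrite exchange_big; apply: eq_bigr => a aC; rewrite -card_in_set_sum.
apply: eq_card => b; rewrite !inE /edge (halving_sym b a).
by case hab: (halving p a b); rewrite /= ?andbF // (closC a b aC hab).
Qed.

Lemma nleft_mono (S : {set 'I_n}) a b : a \in S -> (p a).1 < (p b).1 ->
  (nleft p S a < nleft p S b)%N.
Proof.
move=> aS ab; apply: proper_card; apply/properP; split.
  by apply/subsetP => w; rewrite !inE => /andP[-> hw]; apply: lt_trans hw ab.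
by exists a; rewrite !inE ?aS ?ab ?ltxx.
Qed.

(* A threshold set L = {a in C | nleft P a < t} is an initial segment of C in
   the horizontal order; hence v in C belongs to it iff fewer than #|L| points
   of C lie to the left of v. *)
Lemma nleft_threshold (C : {set 'I_n}) (t : nat) v : v \in C ->
  let L := [set a in C | (nleft p setT a < t)%N] in
  ((nleft p C v < #|L|)%N <-> (nleft p setT v < t)%N).
Proof.
move=> vC L; split=> [lt_vL|vt].
  rewrite ltnNge; apply/negP => tv.
  suff : (#|L| <= nleft p C v)%N by rewrite leqNgt lt_vL.
  apply: subset_leq_card; apply/subsetP => u; rewrite !inE => /andP[-> ut] /=.
  case: (ltgtP (p u).1 (p v).1) => // [vu|/hx uv]; last by rewrite uv ltnNge tv in ut.
  by have := nleft_mono (in_setT v) vu; lia.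
have vL : v \in L by rewrite inE vC vt.
suff : (nleft p C v <= #|L :\ v|)%N by have := cardsD1 v L; rewrite vL; lia.
apply: subset_leq_card; apply/subsetP => u; rewrite !inE => /andP[-> uv] /=.
have := nleft_mono (in_setT u) uv; rewrite andbC => lt_uv.
by rewrite (ltn_trans lt_uv vt); apply: contraTneq uv => ->; rewrite ltxx.
Qed.

Lemma closed_set_half (C : {set 'I_n}) : ~~ odd n ->
  (forall a b, a \in C -> halving p a b -> b \in C) ->
  #|C| = (#|[set a in C | (nleft p setT a < n./2)%N]|).*2.
Proof.
move=> heven closC; have n2 : n = (n./2 + n./2)%N.
  by have := odd_double_half n; rewrite (negbTE heven) add0n -addnn.
set h := n./2.-1; have hh : (n - 2 = h + h)%N by rewrite /h; lia.
have balance : (\sum_(a in C) (right_degree a + (h < nleft p setT a))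
    = \sum_(a in C) (left_degree a + (h < n.-1 - nleft p setT a)))%N.
  by apply: eq_bigr => a _; exact: degree_balance.
rewrite !big_split /= sum_right_left_degree // in balance; move/addnI: balance.
rewrite (eq_bigr (fun a => (~~ (nleft p setT a < n./2)%N : nat))) => [|a _]; last first.
  by congr (nat_of_bool _); apply/idP/idP; have := ltn_ord a; rewrite /h; lia.
rewrite [in RHS](eq_bigr (fun a => ((nleft p setT a < n./2)%N : nat))) => [|a _]; last first.
  by congr (nat_of_bool _); apply/idP/idP; have := ltn_ord a; rewrite /h; lia.
rewrite -!card_in_set_sum => balance.
by rewrite -(card_in_setC C (fun a => nleft p setT a < n./2)%N) balance addnn.
Qed.
End HalvingGeometry.

Unset Implicit Arguments.

Theorem mainTheorem7 (R : realFieldType) (n : nat) (p : 'I_n -> R * R)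
  (hgp : general_position p)
  (heven : ~~ odd n)
  (hx : injective (fun i => (p i).1))
  (c : 'I_n) :
  let C := [set v | connect (halving p) c v] in
  forall v : 'I_n, v \in C ->
    ((nleft p C v < #|C|./2)%N <-> (nleft p [set: 'I_n] v < n./2)%N).
Proof.
move=> C v vC.
have closC a b : a \in C -> halving p a b -> b \in C.
  by rewrite !inE => ca hab; apply: connect_trans ca (connect1 hab).
rewrite (closed_set_half hgp hx heven closC) doubleK.
exact: nleft_threshold.
Qed.
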